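(* Fix a positive integer $u$ and define $f:\mathbb Z_{\ge0}\times\mathbb R_{\ge0}\to\mathbb R$ by $f(p,q)=qu$ if $q\le\lfloor p/u\rfloor$; $f(p,q)=u\lfloor p/u\rfloor+u\left(\tfrac pu-\lfloor \tfrac pu\rfloor\right)\left(q-\lfloor p/u\rfloor\right)$ if $\lfloor p/u\rfloor<q<\lceil p/u\rceil$; and $f(p,q)=p$ if $q\ge\lceil p/u\rceil$. Then for each fixed $p\in\mathbb Z_{\ge0}$, the function $q\mapsto f(p,q)$ is concave on $\mathbb R_{\ge0}$, and for each fixed $q\in\mathbb R_{\ge0}$, the function $p\mapsto f(p,q)$ is concave on $\mathbb Z_{\ge0}$ (i.e. $2f(p,q)\ge f(p-1,q)+f(p+1,q)$ for all integers $p\ge1$). *)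

From Stdlib Require Import Reals Lra Lia Arith.
Open Scope R_scope.

(* floor (p/u) and ceil (p/u) for natural p and positive natural u *)
Definition fl (u p : nat) : nat := Nat.div p u.
Definition cl (u p : nat) : nat := Nat.div (p + u - 1) u.

Definition fpq (u p : nat) (q : R) : R :=
  if Rle_dec q (INR (fl u p)) then q * INR u
  else if Rlt_dec q (INR (cl u p)) then
    INR u * INR (fl u p)
    + INR u * (INR p / INR u - INR (fl u p)) * (q - INR (fl u p))
  else INR p.

Definition concave_on_nonneg (g : R -> R) : Prop :=
  forall x y t, 0 <= x -> 0 <= y -> 0 <= t <= 1 ->
    t * g x + (1 - t) * g y <= g (t * x + (1 - t) * y).

From Stdlib Require Import Reals Lra Lia Psatz ZArith.
Open Scope R_scope.

(* Writing p = u a + r with 0 <= r < u, the function q |-> f(p,q) is the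
   minimum of the three affine functions q u, u a + r (q - a) and p, hence
   concave.  On the other hand, on each unit interval [k, k+1] it is the
   linear interpolation between min(k u, p) and min((k+1) u, p); both are
   concave in p, and linear interpolation preserves midpoint concavity. *)

Lemma concave_on_nonneg_min (g1 g2 : R -> R) :
  concave_on_nonneg g1 -> concave_on_nonneg g2 ->
  concave_on_nonneg (fun x => Rmin (g1 x) (g2 x)).
Proof.
  intros H1 H2 x y t hx hy ht.
  specialize (H1 x y t hx hy ht); specialize (H2 x y t hx hy ht).
  pose proof (Rmin_l (g1 x) (g2 x)); pose proof (Rmin_l (g1 y) (g2 y)).
  pose proof (Rmin_r (g1 x) (g2 x)); pose proof (Rmin_r (g1 y) (g2 y)).
  apply Rmin_glb; nra.
Qed.

Lemma concave_on_nonneg_affine (a b : R) (g : R -> R) :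
  (forall x, g x = a * x + b) -> concave_on_nonneg g.
Proof. intros Hg x y t _ _ _; rewrite !Hg; nra. Qed.

Lemma Rmin_midpoint_concave (c x : R) :
  Rmin c (x - 1) + Rmin c (x + 1) <= 2 * Rmin c x.
Proof. unfold Rmin; repeat destruct Rle_dec; lra. Qed.

Lemma nonneg_split_int_frac (q : R) : 0 <= q ->
  exists (k : nat) (s : R), q = INR k + s /\ 0 <= s < 1.
Proof.
  intros hq; destruct (archimed q) as [Hup Hup'].
  assert (Hz : (0 <= up q - 1)%Z).
  { assert (0 < up q)%Z by (apply lt_IZR; lra); lia. }
  exists (Z.to_nat (up q - 1)), (q - INR (Z.to_nat (up q - 1))).
  rewrite INR_IZR_INZ, Z2Nat.id, minus_IZR by exact Hz.
  split; [ring | lra].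
Qed.

Section Fpq.

Variable u : nat.
Hypothesis hu : (0 < u)%nat.

Lemma INR_div_mod (p : nat) : INR p = INR u * INR (fl u p) + INR (p mod u).
Proof.
  unfold fl; rewrite <- mult_INR, <- plus_INR; f_equal.
  apply Nat.div_mod_eq.
Qed.

Lemma cl_eq_fl (p : nat) : p mod u = 0%nat -> cl u p = fl u p.
Proof.
  intros E; unfold cl, fl; symmetry.
  pose proof (Nat.div_mod_eq p u).
  apply (Nat.div_unique _ _ _ (u - 1)); lia.
Qed.

Lemma cl_eq_S_fl (p : nat) : p mod u <> 0%nat -> cl u p = S (fl u p).
Proof.
  intros E; unfold cl, fl; symmetry.
  pose proof (Nat.div_mod_eq p u); pose proof (Nat.mod_upper_bound p u ltac:(lia)).
  apply (Nat.div_unique _ _ _ (p mod u - 1)); lia.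
Qed.

Lemma fpq_min_affine (p : nat) (q : R) :
  fpq u p q =
  Rmin (q * INR u)
    (Rmin (INR u * INR (fl u p) + INR (p mod u) * (q - INR (fl u p))) (INR p)).
Proof.
  pose proof (INR_div_mod p) as Hp.
  set (a := fl u p) in *; set (r := (p mod u)%nat) in *.
  assert (Hu : 0 < INR u) by (apply lt_0_INR; lia).
  assert (Hru : INR r < INR u)
    by (apply lt_INR, Nat.mod_upper_bound; lia).
  pose proof (pos_INR r).
  unfold fpq; fold a.
  destruct (Rle_dec q (INR a)) as [h1 | h1].
  { rewrite Rmin_left; [reflexivity |]; apply Rmin_glb; nra. }
  destruct (Nat.eq_dec r 0) as [Er | Er].
  - rewrite (cl_eq_fl p Er); fold a; rewrite Er in *; simpl INR in *.
    destruct (Rlt_dec q (INR a)); [lra |].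
    rewrite (Rmin_right (INR u * INR a + 0 * (q - INR a))), Rmin_right; nra.
  - rewrite (cl_eq_S_fl p Er), S_INR; fold a.
    destruct (Rlt_dec q (INR a + 1)) as [h2 | h2].
    + rewrite (Rmin_left (INR u * INR a + INR r * (q - INR a))), Rmin_right by nra.
      replace (INR p / INR u - INR a) with (INR r / INR u)
        by (rewrite Hp; field; lra).
      field; lra.
    + rewrite (Rmin_right (INR u * INR a + INR r * (q - INR a))), Rmin_right; nra.
Qed.

Lemma fpq_concave_in_q (p : nat) : concave_on_nonneg (fun q => fpq u p q).
Proof.
  intros x y t hx hy ht; rewrite !fpq_min_affine.
  revert x y t hx hy ht.
  apply concave_on_nonneg_min; [| apply concave_on_nonneg_min].
  - apply (concave_on_nonneg_affine (INR u) 0); intros; ring.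
  - apply (concave_on_nonneg_affine (INR (p mod u))
             (INR u * INR (fl u p) - INR (p mod u) * INR (fl u p))); intros; ring.
  - apply (concave_on_nonneg_affine 0 (INR p)); intros; ring.
Qed.

Lemma fpq_interpolate (p k : nat) (s : R) : 0 <= s < 1 ->
  fpq u p (INR k + s) =
  (1 - s) * Rmin (INR k * INR u) (INR p) + s * Rmin ((INR k + 1) * INR u) (INR p).
Proof.
  intros hs; rewrite fpq_min_affine.
  pose proof (INR_div_mod p) as Hp.
  set (a := fl u p) in *; set (r := (p mod u)%nat) in *.
  assert (Hu : 0 < INR u) by (apply lt_0_INR; lia).
  assert (Hru : INR r < INR u)
    by (apply lt_INR, Nat.mod_upper_bound; lia).
  pose proof (pos_INR r).
  clearbody a r.
  destruct (lt_eq_lt_dec k a) as [[Hk | <-] | Hk].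
  - assert (Hka : INR k + 1 <= INR a) by (rewrite <- S_INR; apply le_INR; lia).
    assert ((INR k + 1) * INR u <= INR a * INR u) by (apply Rmult_le_compat_r; lra).
    rewrite Rmin_left by (apply Rmin_glb; nra).
    rewrite !Rmin_left; nra.
  - rewrite (Rmin_left (INR u * INR k + _)) by nra.
    rewrite Rmin_right, (Rmin_left (INR k * INR u)), Rmin_right; nra.
  - assert (Hak : INR a + 1 <= INR k) by (rewrite <- S_INR; apply le_INR; lia).
    rewrite (Rmin_right (INR u * INR a + INR r * (INR k + s - INR a))),
      !Rmin_right; nra.
Qed.

Lemma fpq_midpoint_concave_in_p (q : R) (p : nat) : 0 <= q -> (1 <= p)%nat ->
  fpq u (p - 1) q + fpq u (p + 1) q <= 2 * fpq u p q.
Proof.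
  intros hq hp.
  destruct (nonneg_split_int_frac q hq) as [k [s [-> hs]]].
  rewrite !fpq_interpolate, minus_INR, plus_INR by (assumption || lia).
  simpl INR.
  pose proof (Rmin_midpoint_concave (INR k * INR u) (INR p)).
  pose proof (Rmin_midpoint_concave ((INR k + 1) * INR u) (INR p)).
  nra.
Qed.

End Fpq.

Theorem claim1 (u : nat) (hu : (0 < u)%nat) :
  (forall p : nat, concave_on_nonneg (fun q => fpq u p q)) /\
  (forall (q : R), 0 <= q ->
     forall p : nat, (1 <= p)%nat ->
       fpq u (p - 1) q + fpq u (p + 1) q <= 2 * fpq u p q).
Proof.
  split.
  - exact (fpq_concave_in_q u hu).
  - intros q hq p hp; exact (fpq_midpoint_concave_in_p u hu q p hq hp).
Qed.
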